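(* Let $q,z$ be complex numbers with $|q|<1$ and $|z|<1$, with $-zq^{j}\neq 1$ for all $j\ge1$. Let $\theta(z;q)=\sum_{n=0}^\infty(-1)^nq^{n(n-1)/2}z^{n}$ be the partial theta function. Then $$\frac{(zq;q)_\infty}{(-zq;q)_\infty}+\sum_{n=0}^{\infty}\frac{(-1,z;q)_n}{(q,-zq;q)_n}(-z)^nq^{n^2+n}=\sum_{n=0}^{\infty}\frac{(-1,z;q)_n}{(q,-zq;q)_n}\big(1+q^n+zq^{n}-zq^{2n}\big)(-z)^nq^{n^2}\,\theta(z^2q^{2n+1};q^2).$$
   Context: $(x;q)_\infty=\prod_{j\ge0}(1-xq^j)$, $(x;q)_n=\prod_{j=0}^{n-1}(1-xq^j)$, and $(x_1,x_2;q)_n=(x_1;q)_n(x_2;q)_n$. *)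

From Stdlib Require Import Reals.
From Coquelicot Require Import Coquelicot.

Open Scope C_scope.

Fixpoint qpoch (x q : C) (n : nat) : C :=
  match n with
  | O => 1
  | S m => qpoch x q m * (1 - x * q ^ m)
  end.

Definition is_qpoch_inf (x q P : C) : Prop :=
  filterlim (qpoch x q) eventually (locally P).

Definition ptheta_term (z q : C) (n : nat) : C :=
  (-1) ^ n * q ^ (Nat.div (n * (n - 1)) 2) * z ^ n.

Definition is_ptheta (z q t : C) : Prop :=
  is_series (ptheta_term z q) t.

Definition coef (z q : C) (n : nat) : C :=
  qpoch (-1) q n * qpoch z q n / (qpoch q q n * qpoch (- z * q) q n).

(* Let F(w) be the sum of [quot_term q w], i.e. of
   (-1,w;q)_n / (q,-wq;q)_n (-w)^n q^(n^2) (1 - w q^(2n)) / (1 - w).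
   Comparing consecutive coefficients, (1 + wq) F(w) - (1 - wq) F(wq) is a telescoping series
   with sum 0.  Iterating, F(z) (-zq;q)_k = F(zq^k) (zq;q)_k, and since F(w) = 1 + O(w)
   uniformly, letting k -> oo gives F(z) = (zq;q)_oo / (-zq;q)_oo.
   On the right-hand side, the recurrence theta(x; q^2) = 1 - x theta(x q^2; q^2) turns the
   n-th term into the n-th terms of F(z) and of S plus a difference W_n - W_(n+1) of
   [defect]s, where W_0 = 0 and W_n -> 0 geometrically.
   All estimates rest on the uniform bounds
   exp (-|q| / (1 - |q|)^2) <= |(x;q)_n| <= exp (1 / (1 - |q|)),
   valid for |x| <= |q| and for |x| <= 1 respectively. *)

From Stdlib Require Import Reals Lra Lia ClassicalEpsilon.
From Coquelicot Require Import Coquelicot.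
Open Scope C_scope.

Lemma filterlim_C_Cmod (u : nat -> C) (l : C) :
  filterlim u eventually (locally l) <-> is_lim_seq (fun n => Cmod (u n - l)) 0%R.
Proof.
  rewrite filterlim_locally_ball_norm, <- is_lim_seq_spec.
  split; intros H eps; eapply filter_imp; try exact (H eps); intros n Hn; revert Hn;
    cbv beta; rewrite Rminus_0_r, Rabs_pos_eq by apply Cmod_ge_0; trivial.
Qed.

Lemma filterlim_C_of_dist (u : nat -> C) (l : C) (b : nat -> R) :
  (forall n, (Cmod (u n - l) <= b n)%R) -> is_lim_seq b 0%R ->
  filterlim u eventually (locally l).
Proof.
  intros Hub Hb. apply filterlim_C_Cmod.
  apply (is_lim_seq_le_le (fun _ => 0%R) _ b); [| apply is_lim_seq_const | exact Hb].
  intros n. split; [apply Cmod_ge_0 | apply Hub].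
Qed.

Lemma is_lim_seq_geom_scal (c r : R) : (0 <= r < 1)%R ->
  is_lim_seq (fun n => (c * r ^ n)%R) 0%R.
Proof.
  intros Hr. rewrite <- (Rmult_0_r c). apply (is_lim_seq_scal_l _ c 0%R).
  apply is_lim_seq_geom. rewrite Rabs_pos_eq; lra.
Qed.

Lemma filterlim_C_geom (u : nat -> C) (c r : R) : (0 <= r < 1)%R ->
  (forall n, (Cmod (u n) <= c * r ^ n)%R) -> filterlim u eventually (locally (0 : C)).
Proof.
  intros Hr Hu. apply (filterlim_C_of_dist _ _ (fun n => c * r ^ n)%R).
  - intros n. replace (u n - 0) with (u n) by ring. apply Hu.
  - apply is_lim_seq_geom_scal, Hr.
Qed.

Lemma is_lim_seq_Cmod (u : nat -> C) (l : C) :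
  filterlim u eventually (locally l) -> is_lim_seq (fun n => Cmod (u n)) (Cmod l).
Proof. intros H. exact (filterlim_comp _ _ _ u norm _ _ _ H (filterlim_norm l)). Qed.

Lemma Cmod_lim_le (u : nat -> C) (l : C) (M : R) :
  filterlim u eventually (locally l) -> (forall n, (Cmod (u n) <= M)%R) -> (Cmod l <= M)%R.
Proof.
  intros Hl HM.
  exact (is_lim_seq_le _ (fun _ => M) _ M HM (is_lim_seq_Cmod _ _ Hl) (is_lim_seq_const M)).
Qed.

Lemma Cmod_lim_ge (u : nat -> C) (l : C) (K : R) :
  filterlim u eventually (locally l) -> (forall n, (K <= Cmod (u n))%R) -> (K <= Cmod l)%R.
Proof.
  intros Hl HK.
  exact (is_lim_seq_le (fun _ => K) _ K _ HK (is_lim_seq_const K) (is_lim_seq_Cmod _ _ Hl)).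
Qed.

Lemma filterlim_C_unique (u : nat -> C) (l1 l2 : C) :
  filterlim u eventually (locally l1) -> filterlim u eventually (locally l2) -> l1 = l2.
Proof. apply (filterlim_locally_unique (K := C_AbsRing) (V := C_NormedModule)). Qed.

Lemma filterlim_shift_inv {T : Type} (u : nat -> T) (F : (T -> Prop) -> Prop) :
  filterlim (fun n => u (S n)) eventually F -> filterlim u eventually F.
Proof.
  intros H P HP. destruct (H P HP) as [N HN]. exists (S N).
  intros [|n] Hn; [lia | apply HN; lia].
Qed.

Lemma sum_n_C_S (a : nat -> C) (N : nat) : sum_n a (S N) = sum_n a N + a (S N).
Proof. rewrite sum_Sn. reflexivity. Qed.

Lemma ex_series_geom_le (a : nat -> C) (B r : R) : (0 <= r < 1)%R ->
  (forall n, (Cmod (a n) <= B * r ^ n)%R) -> ex_series a.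
Proof.
  intros Hr Hb.
  apply (ex_series_le (K := C_AbsRing) (V := C_CompleteNormedModule) _ _ Hb).
  exists (B * / (1 - r))%R. apply (is_series_scal_l (K := R_AbsRing) (V := R_NormedModule)).
  apply is_series_geom. rewrite Rabs_pos_eq; lra.
Qed.

Lemma Cmod_series_le (a : nat -> C) (l : C) (B r : R) : (0 <= r < 1)%R ->
  (forall n, (Cmod (a n) <= B * r ^ n)%R) -> is_series a l -> (Cmod l <= B / (1 - r))%R.
Proof.
  intros Hr Hb Hl.
  assert (HB : (0 <= B)%R) by (pose proof (Hb O); pose proof (Cmod_ge_0 (a O)); simpl in *; lra).
  assert (Hpart : forall N, (Cmod (sum_n a N) <= B * (1 - r ^ S N) / (1 - r))%R).
  { induction N as [|N IH].
    - rewrite sum_O.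
      replace (B * (1 - r ^ 1) / (1 - r))%R with (B * r ^ 0)%R by (simpl; field; lra).
      apply Hb.
    - rewrite sum_n_C_S. eapply Rle_trans; [apply Cmod_triangle|].
      replace (B * (1 - r ^ S (S N)) / (1 - r))%R
        with (B * (1 - r ^ S N) / (1 - r) + B * r ^ S N)%R by (simpl; field; lra).
      apply Rplus_le_compat; [exact IH | apply Hb]. }
  apply (Cmod_lim_le (sum_n a) l); [exact Hl|]. intros N.
  eapply Rle_trans; [apply Hpart|]. apply Rmult_le_compat_r.
  - apply Rlt_le, Rinv_0_lt_compat. lra.
  - pose proof (pow_le r (S N) (proj1 Hr)). nra.
Qed.

Lemma is_series_C_unique (a : nat -> C) (l1 l2 : C) :
  is_series a l1 -> is_series a l2 -> l1 = l2.
Proof. apply filterlim_C_unique. Qed.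

Lemma is_series_telescope (W : nat -> C) :
  filterlim W eventually (locally (0 : C)) -> is_series (fun n => W n - W (S n)) (W O).
Proof.
  intros HW.
  assert (Hsum : forall N, @eq C (sum_n (fun n => W n - W (S n)) N) (W O - W (S N))).
  { induction N as [|N IH]; [apply sum_O|].
    rewrite sum_n_C_S, IH. ring. }
  apply (filterlim_C_of_dist _ _ (fun N => Cmod (W (S N)))).
  - intros N. rewrite Hsum. replace (W O - W (S N) - W O) with (- W (S N)) by ring.
    rewrite Cmod_opp. apply Rle_refl.
  - rewrite <- Cmod_0. apply (is_lim_seq_subseq (fun n => Cmod (W n))).
    + apply eventually_subseq. intros n. lia.
    + apply is_lim_seq_Cmod, HW.
Qed.

Lemma exp_le_compat (a b : R) : (a <= b)%R -> (exp a <= exp b)%R.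
Proof. intros [H| ->]; [apply Rlt_le, exp_increasing, H | apply Rle_refl]. Qed.

Lemma exp_opp_le_1_sub (a r : R) : (0 <= a <= r)%R -> (r < 1)%R ->
  (exp (- (a / (1 - r))) <= 1 - a)%R.
Proof.
  intros Ha Hr. set (y := (a / (1 - r))%R).
  assert (Hy : (y * (1 - r) = a)%R) by (unfold y; field; lra).
  assert (Hy0 : (0 <= y)%R) by (unfold y; apply Rdiv_le_0_compat; lra).
  pose proof (exp_ineq1_le y). pose proof (exp_pos y).
  rewrite exp_Ropp. apply (Rmult_le_reg_r (exp y)); [assumption|].
  rewrite Rinv_l by lra. apply Rle_trans with ((1 - a) * (1 + y))%R; [nra|].
  apply Rmult_le_compat_l; lra.
Qed.

Lemma pow_le_one (r : R) (n : nat) : (0 <= r <= 1)%R -> (r ^ n <= 1)%R.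
Proof. intros H. rewrite <- (pow1 n). apply pow_incr, H. Qed.

Lemma Cmod_1_sub_ge (w : C) : (1 - Cmod w <= Cmod (1 - w))%R.
Proof.
  pose proof (Cmod_triangle (1 - w) w) as H.
  replace (1 - w + w) with (RtoC 1) in H by ring. rewrite Cmod_1 in H. lra.
Qed.

Lemma Cmod_1_add_le (w : C) : (Cmod (1 + w) <= 1 + Cmod w)%R.
Proof. rewrite <- Cmod_1 at 2. apply Cmod_triangle. Qed.

Lemma Cmod_1_sub_le (w : C) : (Cmod (1 - w) <= 1 + Cmod w)%R.
Proof. rewrite <- (Cmod_opp w). apply Cmod_1_add_le. Qed.

Lemma one_sub_neq0 (a : C) : (Cmod a < 1)%R -> 1 - a <> 0.
Proof. intros H E. pose proof (Cmod_1_sub_ge a) as H1. rewrite E, Cmod_0 in H1. lra. Qed.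

Lemma one_add_neq0 (a : C) : (Cmod a < 1)%R -> 1 + a <> 0.
Proof.
  intros H. replace (1 + a) with (1 - - a) by ring. apply one_sub_neq0. rewrite Cmod_opp. exact H.
Qed.

Lemma Cmod_pow_le_1 (q : C) (n : nat) : (Cmod q <= 1)%R -> (Cmod (q ^ n) <= 1)%R.
Proof. intros H. rewrite Cmod_pow. apply pow_le_one. split; [apply Cmod_ge_0 | exact H]. Qed.

Lemma Cmod_pow_S_lt_1 (q : C) (n : nat) : (Cmod q < 1)%R -> (Cmod (q ^ S n) < 1)%R.
Proof.
  intros H. rewrite Cpow_S, Cmod_mult. pose proof (Cmod_pow_le_1 q n (Rlt_le _ _ H)).
  pose proof (Cmod_ge_0 (q ^ n)). pose proof (Cmod_ge_0 q). nra.
Qed.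

Lemma Cmod_mul_lt_1 (a b : C) : (Cmod a <= 1)%R -> (Cmod b < 1)%R -> (Cmod (a * b) < 1)%R.
Proof.
  intros Ha Hb. rewrite Cmod_mult. pose proof (Cmod_ge_0 a). pose proof (Cmod_ge_0 b). nra.
Qed.

Lemma Cmod_mul_pow_le (z q : C) (k : nat) : (Cmod q <= 1)%R -> (Cmod (z * q ^ k) <= Cmod z)%R.
Proof.
  intros Hq. rewrite Cmod_mult. pose proof (Cmod_pow_le_1 q k Hq).
  pose proof (Cmod_ge_0 z). pose proof (Cmod_ge_0 (q ^ k)). nra.
Qed.

Lemma Cmod_neg_mul_le (w q : C) : (Cmod w <= 1)%R -> (Cmod (- w * q) <= Cmod q)%R.
Proof. intros Hw. rewrite Cmod_mult, Cmod_opp. pose proof (Cmod_ge_0 q). nra. Qed.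

Lemma Cmod_div_1_sub_le (a w : C) (M r : R) : (Cmod a <= M)%R -> (Cmod w <= r)%R -> (r < 1)%R ->
  (Cmod (a / (1 - w)) <= M / (1 - r))%R.
Proof.
  intros Ha Hw Hr. pose proof (Cmod_1_sub_ge w). pose proof (Cmod_ge_0 a).
  rewrite Cmod_div by (apply one_sub_neq0; lra). unfold Rdiv.
  apply Rmult_le_compat; try lra.
  - apply Rlt_le, Rinv_0_lt_compat. lra.
  - apply Rinv_le_contravar; lra.
Qed.

Lemma Cpow_double (q : C) (n : nat) : q ^ (2 * n) = q ^ n * q ^ n.
Proof. replace (2 * n)%nat with (n + n)%nat by lia. apply Cpow_add_r. Qed.

Lemma Cpow_square_S (q : C) (n : nat) : q ^ (S n * S n) = q ^ (n * n) * q ^ n * q ^ n * q.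
Proof.
  replace (S n * S n)%nat with (S (n * n + n + n)) by lia.
  rewrite Cpow_S, !Cpow_add_r. ring.
Qed.

(** * q-Pochhammer symbols *)

Lemma qpoch_S (x q : C) (n : nat) : qpoch x q (S n) = qpoch x q n * (1 - x * q ^ n).
Proof. reflexivity. Qed.

Lemma qpoch_mul_q (x q : C) (n : nat) : (1 - x) * qpoch (x * q) q n = qpoch x q (S n).
Proof.
  induction n as [|n IH]; [simpl; ring|].
  rewrite (qpoch_S (x * q)), (qpoch_S x q (S n)), <- IH, Cpow_S. ring.
Qed.

Lemma Cmod_qpoch_le_exp (x q : C) (n : nat) : (Cmod q < 1)%R ->
  (Cmod (qpoch x q n) <= exp (Cmod x * (1 - Cmod q ^ n) / (1 - Cmod q)))%R.
Proof.
  intros Hq. induction n as [|n IH].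
  - simpl. rewrite Cmod_1, Rminus_diag, Rmult_0_r, Rdiv_0_l, exp_0. apply Rle_refl.
  - rewrite qpoch_S, Cmod_mult.
    replace (Cmod x * (1 - Cmod q ^ S n) / (1 - Cmod q))%R
      with (Cmod x * (1 - Cmod q ^ n) / (1 - Cmod q) + Cmod x * Cmod q ^ n)%R
      by (simpl; field; lra).
    rewrite exp_plus. apply Rmult_le_compat; try apply Cmod_ge_0; [exact IH|].
    eapply Rle_trans; [apply Cmod_1_sub_le|].
    rewrite Cmod_mult, Cmod_pow. apply exp_ineq1_le.
Qed.

Lemma exp_le_Cmod_qpoch (x q : C) (n : nat) : (Cmod q < 1)%R -> (Cmod x <= Cmod q)%R ->
  (exp (- (Cmod q * (1 - Cmod q ^ n) / (1 - Cmod q) ^ 2)) <= Cmod (qpoch x q n))%R.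
Proof.
  intros Hq Hx. pose proof (Cmod_ge_0 q) as Hr. set (r := Cmod q) in *.
  induction n as [|n IH].
  - simpl. rewrite Cmod_1, Rminus_diag, Rmult_0_r, Rdiv_0_l, Ropp_0, exp_0. apply Rle_refl.
  - rewrite qpoch_S, Cmod_mult.
    assert (Hrn : (0 <= r ^ n <= 1)%R) by (split; [apply pow_le | apply pow_le_one]; lra).
    replace (- (r * (1 - r ^ S n) / (1 - r) ^ 2))%R
      with (- (r * (1 - r ^ n) / (1 - r) ^ 2) + - (r ^ S n / (1 - r)))%R
      by (simpl; field; lra).
    rewrite exp_plus. apply Rmult_le_compat; try (apply Rlt_le, exp_pos); [exact IH|].
    eapply Rle_trans; [| apply Cmod_1_sub_ge]. rewrite Cmod_mult, Cmod_pow.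
    eapply Rle_trans; [apply (exp_opp_le_1_sub _ r) | ]; simpl; [nra | lra |].
    apply Rplus_le_compat_l, Ropp_le_contravar, Rmult_le_compat_r; lra.
Qed.

Definition qpoch_ub (q : C) : R := exp (1 / (1 - Cmod q)).
Definition qpoch_lb (q : C) : R := exp (- (Cmod q / (1 - Cmod q) ^ 2)).

Lemma Cmod_qpoch_le (x q : C) (n : nat) : (Cmod q < 1)%R -> (Cmod x <= 1)%R ->
  (Cmod (qpoch x q n) <= qpoch_ub q)%R.
Proof.
  intros Hq Hx. eapply Rle_trans; [apply Cmod_qpoch_le_exp, Hq|]. apply exp_le_compat.
  pose proof (Cmod_ge_0 x). pose proof (pow_le (Cmod q) n (Cmod_ge_0 q)).
  unfold Rdiv. apply Rmult_le_compat_r; [apply Rlt_le, Rinv_0_lt_compat; lra | nra].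
Qed.

Lemma qpoch_lb_le_Cmod (x q : C) (n : nat) : (Cmod q < 1)%R -> (Cmod x <= Cmod q)%R ->
  (qpoch_lb q <= Cmod (qpoch x q n))%R.
Proof.
  intros Hq Hx. eapply Rle_trans; [| apply exp_le_Cmod_qpoch; assumption].
  apply exp_le_compat, Ropp_le_contravar.
  pose proof (Cmod_ge_0 q). pose proof (pow_le (Cmod q) n (Cmod_ge_0 q)).
  unfold Rdiv. apply Rmult_le_compat_r; [apply Rlt_le, Rinv_0_lt_compat, pow_lt; lra | nra].
Qed.

Lemma qpoch_neq0 (x q : C) (n : nat) : (Cmod q < 1)%R -> (Cmod x <= Cmod q)%R ->
  qpoch x q n <> 0.
Proof.
  intros Hq Hx. apply Cmod_gt_0.
  eapply Rlt_le_trans; [apply exp_pos | apply qpoch_lb_le_Cmod; assumption].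
Qed.

Lemma ex_qpoch_inf (x q : C) : (Cmod q < 1)%R -> (Cmod x <= 1)%R -> exists P, is_qpoch_inf x q P.
Proof.
  intros Hq Hx. set (a := fun n => qpoch x q (S n) - qpoch x q n).
  assert (Ha : forall n, (Cmod (a n) <= qpoch_ub q * Cmod q ^ n)%R).
  { intros n. unfold a. rewrite qpoch_S.
    replace (qpoch x q n * (1 - x * q ^ n) - qpoch x q n)
      with (- (qpoch x q n * (x * q ^ n))) by ring.
    rewrite Cmod_opp, !Cmod_mult, Cmod_pow.
    pose proof (pow_le (Cmod q) n (Cmod_ge_0 q)). pose proof (Cmod_ge_0 x).
    apply Rmult_le_compat; [apply Cmod_ge_0 | apply Rmult_le_pos; assumption | |].
    - apply Cmod_qpoch_le; assumption.
    - rewrite <- (Rmult_1_l (Cmod q ^ n)) at 2. apply Rmult_le_compat_r; assumption. }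
  destruct (ex_series_geom_le a _ (Cmod q) ltac:(split; [apply Cmod_ge_0 | exact Hq]) Ha) as [L HL].
  assert (Hsum : forall N, @eq C (sum_n a N) (qpoch x q (S N) - 1)).
  { induction N as [|N IH]; [apply sum_O|].
    rewrite sum_n_C_S, IH. unfold a. ring. }
  exists (L + 1). apply filterlim_shift_inv.
  apply (filterlim_C_of_dist _ _ (fun N => Cmod (sum_n a N - L))).
  - intros N. rewrite Hsum. apply Req_le. f_equal. ring.
  - apply filterlim_C_Cmod, HL.
Qed.

Lemma is_qpoch_inf_neq0 (x q P : C) : (Cmod q < 1)%R -> (Cmod x <= Cmod q)%R ->
  is_qpoch_inf x q P -> P <> 0.
Proof.
  intros Hq Hx HP. apply Cmod_gt_0. eapply Rlt_le_trans; [apply exp_pos|].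
  apply (Cmod_lim_ge _ _ _ HP). intros n. apply qpoch_lb_le_Cmod; assumption.
Qed.

Definition coef_ub (q : C) : R := (qpoch_ub q / qpoch_lb q) ^ 2.

Lemma coef_ub_ge0 (q : C) : (0 <= coef_ub q)%R.
Proof. apply pow2_ge_0. Qed.

Lemma Cmod_coef_le (w q : C) (n : nat) : (Cmod q < 1)%R -> (Cmod w <= 1)%R ->
  (Cmod (coef w q n) <= coef_ub q)%R.
Proof.
  intros Hq Hw. pose proof (Cmod_neg_mul_le w q Hw) as Hwq.
  assert (HL : forall x, (Cmod x <= Cmod q)%R -> (0 < qpoch_lb q <= Cmod (qpoch x q n))%R).
  { intros x Hx. split; [apply exp_pos | apply qpoch_lb_le_Cmod; assumption]. }
  assert (HU : forall x, (Cmod x <= 1)%R -> (0 <= Cmod (qpoch x q n) <= qpoch_ub q)%R).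
  { intros x Hx. split; [apply Cmod_ge_0 | apply Cmod_qpoch_le; assumption]. }
  pose proof (HL q (Rle_refl _)) as H1. pose proof (HL _ Hwq) as H2.
  pose proof (HU (-1) ltac:(rewrite Cmod_R, Rabs_m1; lra)) as H3. pose proof (HU w Hw) as H4.
  unfold coef, coef_ub.
  rewrite Cmod_div, !Cmod_mult by (apply Cmult_neq_0; apply qpoch_neq0; lra).
  replace ((qpoch_ub q / qpoch_lb q) ^ 2)%R
    with (qpoch_ub q * qpoch_ub q * / (qpoch_lb q * qpoch_lb q))%R by (field; lra).
  unfold Rdiv. apply Rmult_le_compat.
  - apply Rmult_le_pos; apply Cmod_ge_0.
  - apply Rlt_le, Rinv_0_lt_compat. nra.
  - apply Rmult_le_compat; lra.
  - apply Rinv_le_contravar; [nra|]. apply Rmult_le_compat; lra.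
Qed.

Lemma coef_S (w q : C) (n : nat) : (Cmod q < 1)%R -> (Cmod w <= 1)%R ->
  coef w q (S n) = coef w q n * ((1 + q ^ n) * (1 - w * q ^ n))
                   / ((1 - q ^ S n) * (1 + w * q ^ S n)).
Proof.
  intros Hq Hw. pose proof (Cmod_pow_S_lt_1 q n Hq) as Hqn.
  assert (N1 : 1 - q ^ S n <> 0) by (apply one_sub_neq0, Hqn).
  assert (N2 : 1 + w * q ^ S n <> 0) by (apply one_add_neq0, Cmod_mul_lt_1; assumption).
  assert (N3 : qpoch q q n <> 0) by (apply qpoch_neq0; lra).
  assert (N4 : qpoch (- w * q) q n <> 0) by (apply qpoch_neq0, Cmod_neg_mul_le; assumption).
  unfold coef. rewrite !qpoch_S. rewrite Cpow_S in *. field. auto.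
Qed.

Lemma coef_mul_q (w q : C) (n : nat) : (Cmod q < 1)%R -> (Cmod w < 1)%R ->
  coef (w * q) q n = coef w q n * ((1 + w * q) * (1 - w * q ^ n))
                     / ((1 - w) * (1 + w * q ^ S n)).
Proof.
  intros Hq Hw. pose proof (Cmod_pow_S_lt_1 q n Hq) as Hqn.
  assert (Hw1 : (Cmod w <= 1)%R) by lra.
  assert (N1 : 1 - w <> 0) by (apply one_sub_neq0, Hw).
  assert (N2 : 1 + w * q ^ S n <> 0) by (apply one_add_neq0, Cmod_mul_lt_1; assumption).
  assert (N3 : 1 + w * q <> 0) by (apply one_add_neq0, Cmod_mul_lt_1; assumption).
  assert (N4 : qpoch q q n <> 0) by (apply qpoch_neq0; lra).
  assert (N5 : qpoch (- w * q) q n <> 0) by (apply qpoch_neq0, Cmod_neg_mul_le; assumption).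
  assert (E1 : qpoch (w * q) q n = qpoch w q n * (1 - w * q ^ n) / (1 - w)).
  { rewrite <- qpoch_S, <- qpoch_mul_q. field. exact N1. }
  assert (E2 : qpoch (- (w * q) * q) q n = qpoch (- w * q) q n * (1 + w * q ^ S n) / (1 + w * q)).
  { replace (- (w * q) * q) with (- w * q * q) by ring.
    replace (1 + w * q ^ S n) with (1 - - w * q * q ^ n) by (rewrite Cpow_S; ring).
    rewrite <- qpoch_S, <- qpoch_mul_q. field.
    replace (1 - - w * q) with (1 + w * q) by ring. exact N3. }
  unfold coef. rewrite E1, E2. field. auto.
Qed.

Definition coef_term (q w : C) (n : nat) : C := coef w q n * (- w) ^ n * q ^ (n * n).

Lemma Cmod_coef_term_le (q w : C) (n : nat) : (Cmod q < 1)%R -> (Cmod w <= 1)%R ->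
  (Cmod (coef_term q w n) <= coef_ub q * Cmod w ^ n)%R.
Proof.
  intros Hq Hw. unfold coef_term. rewrite !Cmod_mult, Cmod_pow, Cmod_opp.
  rewrite <- (Rmult_1_r (coef_ub q * Cmod w ^ n)).
  apply Rmult_le_compat; try apply Cmod_ge_0.
  - apply Rmult_le_pos; [apply Cmod_ge_0 | apply pow_le, Cmod_ge_0].
  - apply Rmult_le_compat_r; [apply pow_le, Cmod_ge_0 | apply Cmod_coef_le; assumption].
  - apply Cmod_pow_le_1. lra.
Qed.

(** * The partial theta function *)

Lemma triangular_S (m : nat) :
  Nat.div (S m * (S m - 1)) 2 = (Nat.div (m * (m - 1)) 2 + m)%nat.
Proof.
  replace (S m * (S m - 1))%nat with (m * (m - 1) + m * 2)%nat
    by (destruct m as [|k]; [reflexivity | cbn [Nat.sub]; rewrite Nat.sub_0_r; ring]).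
  rewrite Nat.div_add by lia. reflexivity.
Qed.

Lemma ptheta_term_0 (x Q : C) : ptheta_term x Q 0 = 1.
Proof. unfold ptheta_term. simpl. ring. Qed.

Lemma ptheta_term_S (x Q : C) (m : nat) :
  ptheta_term x Q (S m) = - x * ptheta_term (x * Q) Q m.
Proof. unfold ptheta_term. rewrite triangular_S, Cpow_add_r, Cpow_mult_l, !Cpow_S. ring. Qed.

Lemma Cmod_ptheta_term_le (x Q : C) (m : nat) : (Cmod Q <= 1)%R ->
  (Cmod (ptheta_term x Q m) <= Cmod x ^ m)%R.
Proof.
  intros HQ. unfold ptheta_term. rewrite !Cmod_mult, !Cmod_pow, Cmod_R, Rabs_m1, pow1, Rmult_1_l.
  set (k := Nat.div (m * (m - 1)) 2).
  pose proof (Cmod_pow_le_1 Q k HQ) as HQk. rewrite Cmod_pow in HQk.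
  pose proof (pow_le (Cmod x) m (Cmod_ge_0 x)). pose proof (pow_le (Cmod Q) k (Cmod_ge_0 Q)). nra.
Qed.

Lemma ex_ptheta (x Q : C) : (Cmod x < 1)%R -> (Cmod Q <= 1)%R -> exists T, is_ptheta x Q T.
Proof.
  intros Hx HQ. apply (ex_series_geom_le _ 1 (Cmod x)).
  - split; [apply Cmod_ge_0 | exact Hx].
  - intros m. rewrite Rmult_1_l. apply Cmod_ptheta_term_le, HQ.
Qed.

Lemma Cmod_ptheta_le (x Q T : C) : (Cmod x < 1)%R -> (Cmod Q <= 1)%R ->
  is_ptheta x Q T -> (Cmod T <= 1 / (1 - Cmod x))%R.
Proof.
  intros Hx HQ. apply Cmod_series_le.
  - split; [apply Cmod_ge_0 | exact Hx].
  - intros m. rewrite Rmult_1_l. apply Cmod_ptheta_term_le, HQ.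
Qed.

Lemma is_ptheta_rec (x Q T1 T2 : C) :
  is_ptheta x Q T1 -> is_ptheta (x * Q) Q T2 -> T1 = 1 - x * T2.
Proof.
  intros H1 H2. apply (is_series_C_unique (ptheta_term x Q)); [exact H1|].
  apply (is_series_decr_1 (K := C_AbsRing) (V := C_NormedModule)).
  eapply is_series_ext; [intros m; symmetry; apply ptheta_term_S|].
  rewrite ptheta_term_0.
  match goal with |- is_series _ ?l => replace l with (scal (- x) T2) end.
  - exact (is_series_scal_l (K := C_AbsRing) (V := C_NormedModule) (- x) _ _ H2).
  - change (- x * T2 = 1 - x * T2 + - RtoC 1). ring.
Qed.

(** * The series for (wq;q)_oo / (-wq;q)_oo *)

Definition quot_term (q w : C) (n : nat) : C := coef_term q w n * (1 - w * q ^ (2 * n)) / (1 - w).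

Lemma quot_term_0 (q w : C) : (Cmod w < 1)%R -> quot_term q w 0 = 1.
Proof.
  intros Hw. unfold quot_term, coef_term, coef. simpl. field. apply one_sub_neq0, Hw.
Qed.

Lemma Cmod_quot_term_le (q w : C) (r : R) (n : nat) : (Cmod q < 1)%R ->
  (Cmod w <= r)%R -> (r < 1)%R ->
  (Cmod (quot_term q w n) <= 2 * coef_ub q / (1 - r) * Cmod w ^ n)%R.
Proof.
  intros Hq Hw Hr.
  replace (2 * coef_ub q / (1 - r) * Cmod w ^ n)%R
    with (coef_ub q * Cmod w ^ n * 2 / (1 - r))%R by (field; lra).
  apply Cmod_div_1_sub_le; [| assumption | assumption].
  rewrite Cmod_mult. apply Rmult_le_compat; try apply Cmod_ge_0.
  - apply Cmod_coef_term_le; lra.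
  - eapply Rle_trans; [apply Cmod_1_sub_le|]. rewrite Cmod_mult.
    pose proof (Cmod_pow_le_1 q (2 * n) (Rlt_le _ _ Hq)). pose proof (Cmod_ge_0 w).
    pose proof (Cmod_ge_0 (q ^ (2 * n))). nra.
Qed.

Lemma ex_series_quot_term (q w : C) : (Cmod q < 1)%R -> (Cmod w < 1)%R ->
  ex_series (quot_term q w).
Proof.
  intros Hq Hw. apply (ex_series_geom_le _ (2 * coef_ub q / (1 - Cmod w)) (Cmod w)).
  - split; [apply Cmod_ge_0 | exact Hw].
  - intros n. apply Cmod_quot_term_le; lra.
Qed.

Lemma Cmod_quot_sub_1_le (q w F : C) (r : R) : (Cmod q < 1)%R -> (Cmod w <= r)%R -> (r < 1)%R ->
  is_series (quot_term q w) F -> (Cmod (F - 1) <= 2 * coef_ub q / (1 - r) ^ 2 * Cmod w)%R.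
Proof.
  intros Hq Hw Hr HF. pose proof (Cmod_ge_0 w).
  assert (Htail : is_series (fun n => quot_term q w (S n)) (F - 1)).
  { apply (is_series_incr_1 (K := C_AbsRing) (V := C_NormedModule)).
    rewrite quot_term_0 by lra.
    match goal with |- is_series _ ?l => replace l with F by (change (F = F - 1 + 1); ring) end.
    exact HF. }
  assert (Hb : forall n,
    (Cmod (quot_term q w (S n)) <= 2 * coef_ub q / (1 - r) * Cmod w * Cmod w ^ n)%R).
  { intros n. rewrite Rmult_assoc, tech_pow_Rmult. apply Cmod_quot_term_le; assumption. }
  eapply Rle_trans; [exact (Cmod_series_le _ _ _ (Cmod w) ltac:(lra) Hb Htail)|].
  pose proof (coef_ub_ge0 q).
  replace (2 * coef_ub q / (1 - r) ^ 2 * Cmod w)%R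
    with (2 * coef_ub q / (1 - r) * Cmod w * / (1 - r))%R by (field; lra).
  apply Rmult_le_compat_l.
  - apply Rmult_le_pos; [apply Rdiv_le_0_compat |]; lra.
  - apply Rinv_le_contravar; lra.
Qed.

Definition defect (a q w : C) (n : nat) : C := a * (1 - q ^ n) * coef_term q w n / (1 - w).

Lemma defect_0 (a q w : C) : defect a q w 0 = 0.
Proof. unfold defect. simpl. unfold Cdiv. ring. Qed.

Lemma Cmod_defect_le (a q w : C) (n : nat) : (Cmod q < 1)%R -> (Cmod w < 1)%R ->
  (Cmod a <= 2)%R -> (Cmod (defect a q w n) <= 4 * coef_ub q / (1 - Cmod w) * Cmod w ^ n)%R.
Proof.
  intros Hq Hw Ha.
  replace (4 * coef_ub q / (1 - Cmod w) * Cmod w ^ n)%R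
    with (2 * 2 * (coef_ub q * Cmod w ^ n) / (1 - Cmod w))%R by (field; lra).
  apply Cmod_div_1_sub_le; [| apply Rle_refl | exact Hw].
  rewrite !Cmod_mult. apply Rmult_le_compat; try apply Cmod_ge_0.
  - apply Rmult_le_pos; apply Cmod_ge_0.
  - apply Rmult_le_compat; try apply Cmod_ge_0; [exact Ha|].
    eapply Rle_trans; [apply Cmod_1_sub_le|]. pose proof (Cmod_pow_le_1 q n (Rlt_le _ _ Hq)). lra.
  - apply Cmod_coef_term_le; lra.
Qed.

Lemma quot_term_telescope (q w : C) (n : nat) : (Cmod q < 1)%R -> (Cmod w < 1)%R ->
  (1 + w * q) * quot_term q w n - (1 - w * q) * quot_term q (w * q) n
  = defect (1 + w * q) q w n - defect (1 + w * q) q w (S n).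
Proof.
  intros Hq Hw. assert (Hw1 : (Cmod w <= 1)%R) by lra.
  assert (N1 : 1 - w <> 0) by (apply one_sub_neq0, Hw).
  assert (N2 : 1 - q ^ S n <> 0) by (apply one_sub_neq0, Cmod_pow_S_lt_1, Hq).
  assert (N3 : 1 + w * q ^ S n <> 0)
    by (apply one_add_neq0, Cmod_mul_lt_1; [exact Hw1 | apply Cmod_pow_S_lt_1, Hq]).
  assert (N4 : 1 - w * q <> 0) by (apply one_sub_neq0, Cmod_mul_lt_1; assumption).
  unfold quot_term, defect, coef_term.
  rewrite coef_mul_q, coef_S by assumption.
  replace (- (w * q)) with (- w * q) by ring.
  rewrite Cpow_mult_l, Cpow_square_S, !Cpow_double. rewrite !Cpow_S in *.
  field. auto.
Qed.

Lemma quot_functional_eq (q w F1 F2 : C) : (Cmod q < 1)%R -> (Cmod w < 1)%R ->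
  is_series (quot_term q w) F1 -> is_series (quot_term q (w * q)) F2 ->
  (1 + w * q) * F1 = (1 - w * q) * F2.
Proof.
  intros Hq Hw H1 H2. set (W := defect (1 + w * q) q w).
  assert (Htel : is_series (fun n => W n - W (S n)) (RtoC 0)).
  { replace (RtoC 0) with (W O) by apply defect_0. apply is_series_telescope.
    apply (filterlim_C_geom _ (4 * coef_ub q / (1 - Cmod w)) (Cmod w)).
    - split; [apply Cmod_ge_0 | exact Hw].
    - intros n. apply Cmod_defect_le; try assumption.
      eapply Rle_trans; [apply Cmod_1_add_le|].
      pose proof (Cmod_mul_lt_1 w q ltac:(lra) Hq). lra. }
  assert (Hdiff : is_series (fun n => W n - W (S n)) ((1 + w * q) * F1 - (1 - w * q) * F2)).
  { eapply is_series_ext; [intros n; apply quot_term_telescope; assumption|].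
    exact (is_series_minus (K := C_AbsRing) (V := C_NormedModule) _ _ _ _
             (is_series_scal_l (K := C_AbsRing) (V := C_NormedModule) (1 + w * q) _ _ H1)
             (is_series_scal_l (K := C_AbsRing) (V := C_NormedModule) (1 - w * q) _ _ H2)). }
  pose proof (is_series_C_unique _ _ _ Hdiff Htel) as E.
  replace ((1 + w * q) * F1) with ((1 + w * q) * F1 - (1 - w * q) * F2 + (1 - w * q) * F2) by ring.
  rewrite E. ring.
Qed.

Lemma quot_iter (q z F0 : C) (k : nat) (Fk : C) : (Cmod q < 1)%R -> (Cmod z < 1)%R ->
  is_series (quot_term q z) F0 -> is_series (quot_term q (z * q ^ k)) Fk ->
  F0 * qpoch (- z * q) q k = Fk * qpoch (z * q) q k.
Proof.
  intros Hq Hz H0. revert Fk. induction k as [|k IH]; intros Fk Hk.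
  - simpl in Hk |- *. rewrite Cmult_1_r in Hk. rewrite (is_series_C_unique _ _ _ H0 Hk). ring.
  - assert (Hzk : (Cmod (z * q ^ k) < 1)%R) by (pose proof (Cmod_mul_pow_le z q k ltac:(lra)); lra).
    destruct (ex_series_quot_term q (z * q ^ k) Hq Hzk) as [Fk' HFk'].
    replace (z * q ^ S k) with (z * q ^ k * q) in Hk by (rewrite Cpow_S; ring).
    pose proof (quot_functional_eq q (z * q ^ k) Fk' Fk Hq Hzk HFk' Hk) as E.
    rewrite !qpoch_S.
    transitivity ((F0 * qpoch (- z * q) q k) * (1 + z * q ^ k * q)); [ring|].
    rewrite (IH Fk' HFk').
    transitivity (qpoch (z * q) q k * ((1 + z * q ^ k * q) * Fk')); [ring|].
    rewrite E. ring.
Qed.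

Lemma Cmod_quot_qpoch_sub_le (q z F : C) (k : nat) : (Cmod q < 1)%R -> (Cmod z < 1)%R ->
  is_series (quot_term q z) F ->
  (Cmod (F * qpoch (- z * q) q k - qpoch (z * q) q k)
     <= 2 * coef_ub q / (1 - Cmod z) ^ 2 * Cmod z * qpoch_ub q * Cmod q ^ k)%R.
Proof.
  intros Hq Hz HF. pose proof (Cmod_mul_pow_le z q k ltac:(lra)) as Hzk.
  destruct (ex_series_quot_term q (z * q ^ k) Hq ltac:(lra)) as [Fk HFk].
  rewrite (quot_iter q z F k Fk Hq Hz HF HFk).
  replace (Fk * qpoch (z * q) q k - qpoch (z * q) q k)
    with ((Fk - 1) * qpoch (z * q) q k) by ring.
  pose proof (Cmod_quot_sub_1_le q (z * q ^ k) Fk (Cmod z) Hq Hzk Hz HFk) as HFk1.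
  rewrite Cmod_mult, Cmod_pow in HFk1.
  replace (2 * coef_ub q / (1 - Cmod z) ^ 2 * Cmod z * qpoch_ub q * Cmod q ^ k)%R
    with (2 * coef_ub q / (1 - Cmod z) ^ 2 * (Cmod z * Cmod q ^ k) * qpoch_ub q)%R by ring.
  rewrite Cmod_mult. apply Rmult_le_compat; try apply Cmod_ge_0; [exact HFk1|].
  apply Cmod_qpoch_le; [exact Hq|]. apply Rlt_le, Cmod_mul_lt_1; lra.
Qed.

Lemma quot_mul_qpoch_inf (q z F P1 P2 : C) : (Cmod q < 1)%R -> (Cmod z < 1)%R ->
  is_series (quot_term q z) F -> is_qpoch_inf (z * q) q P1 -> is_qpoch_inf (- z * q) q P2 ->
  F * P2 = P1.
Proof.
  intros Hq Hz HF H1 H2. pose proof (Cmod_ge_0 q).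
  set (c := (2 * coef_ub q / (1 - Cmod z) ^ 2 * Cmod z * qpoch_ub q)%R).
  apply (filterlim_C_unique (fun k => F * qpoch (- z * q) q k)).
  - apply (filterlim_C_of_dist _ _ (fun k => Cmod F * Cmod (qpoch (- z * q) q k - P2))%R).
    + intros k. rewrite <- Cmod_mult. apply Req_le. f_equal. ring.
    + rewrite <- (Rmult_0_r (Cmod F)). apply (is_lim_seq_scal_l _ (Cmod F) 0%R).
      apply filterlim_C_Cmod, H2.
  - apply (filterlim_C_of_dist _ _ (fun k => c * Cmod q ^ k + Cmod (qpoch (z * q) q k - P1))%R).
    + intros k.
      replace (F * qpoch (- z * q) q k - P1)
        with ((F * qpoch (- z * q) q k - qpoch (z * q) q k) + (qpoch (z * q) q k - P1)) by ring.
      eapply Rle_trans; [apply Cmod_triangle|].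
      apply Rplus_le_compat_r, Cmod_quot_qpoch_sub_le; assumption.
    + rewrite <- (Rplus_0_r 0). apply is_lim_seq_plus'.
      * apply is_lim_seq_geom_scal. lra.
      * apply filterlim_C_Cmod, H1.
Qed.

(** * The main identity *)

Lemma rhs_term_telescope (q z : C) (Th : nat -> C) (n : nat) : (Cmod q < 1)%R -> (Cmod z < 1)%R ->
  Th n = 1 - z ^ 2 * q ^ (2 * n + 1) * Th (S n) ->
  coef z q n * (1 + q ^ n + z * q ^ n - z * q ^ (2 * n)) * (- z) ^ n * q ^ (n * n) * Th n
  = quot_term q z n + coef z q n * (- z) ^ n * q ^ (n * n + n)
    + (defect (- z * (1 + z * q ^ n)) q z n * Th n
       - defect (- z * (1 + z * q ^ S n)) q z (S n) * Th (S n)).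
Proof.
  intros Hq Hz Hrec. assert (Hz1 : (Cmod z <= 1)%R) by lra.
  assert (N1 : 1 - z <> 0) by (apply one_sub_neq0, Hz).
  assert (N2 : 1 - q ^ S n <> 0) by (apply one_sub_neq0, Cmod_pow_S_lt_1, Hq).
  assert (N3 : 1 + z * q ^ S n <> 0)
    by (apply one_add_neq0, Cmod_mul_lt_1; [exact Hz1 | apply Cmod_pow_S_lt_1, Hq]).
  rewrite Hrec. unfold quot_term, defect, coef_term. rewrite coef_S by assumption.
  rewrite Cpow_square_S, !Cpow_add_r, !Cpow_double, Cpow_1_r, !Cpow_S in *.
  field. auto.
Qed.

Lemma ex_series_coef_term_qpow (q z : C) : (Cmod q < 1)%R -> (Cmod z < 1)%R ->
  ex_series (fun n => coef z q n * (- z) ^ n * q ^ (n * n + n)).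
Proof.
  intros Hq Hz. apply (ex_series_geom_le _ (coef_ub q) (Cmod z)).
  - split; [apply Cmod_ge_0 | exact Hz].
  - intros n. rewrite Cpow_add_r, Cmult_assoc, Cmod_mult.
    rewrite <- (Rmult_1_r (coef_ub q * Cmod z ^ n)).
    apply Rmult_le_compat; try apply Cmod_ge_0;
      [apply Cmod_coef_term_le | apply Cmod_pow_le_1]; lra.
Qed.

Lemma Cmod_ptheta_arg_le (z q : C) (n : nat) : (Cmod q < 1)%R ->
  (Cmod (z ^ 2 * q ^ (2 * n + 1)) <= Cmod z ^ 2)%R.
Proof. intros Hq. rewrite <- Cmod_pow. apply Cmod_mul_pow_le. lra. Qed.

Lemma rhs_defect_vanishes (q z : C) (Th : nat -> C) : (Cmod q < 1)%R -> (Cmod z < 1)%R ->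
  (forall n, is_ptheta (z ^ 2 * q ^ (2 * n + 1)) (q ^ 2) (Th n)) ->
  filterlim (fun n => defect (- z * (1 + z * q ^ n)) q z n * Th n)
    eventually (locally (0 : C)).
Proof.
  intros Hq Hz HTh. pose proof (Cmod_ge_0 z).
  assert (Hz2 : (Cmod z ^ 2 < 1)%R) by nra.
  assert (HQ : (Cmod (q ^ 2) <= 1)%R) by (apply Cmod_pow_le_1; lra).
  apply (filterlim_C_geom _ (4 * coef_ub q / (1 - Cmod z) * (1 / (1 - Cmod z ^ 2))) (Cmod z));
    [lra | intros n].
  rewrite Cmod_mult.
  replace (4 * coef_ub q / (1 - Cmod z) * (1 / (1 - Cmod z ^ 2)) * Cmod z ^ n)%R
    with (4 * coef_ub q / (1 - Cmod z) * Cmod z ^ n * (1 / (1 - Cmod z ^ 2)))%R by ring.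
  apply Rmult_le_compat; try apply Cmod_ge_0.
  - apply Cmod_defect_le; try assumption.
    rewrite Cmod_mult, Cmod_opp. pose proof (Cmod_1_add_le (z * q ^ n)).
    pose proof (Cmod_mul_pow_le z q n ltac:(lra)). pose proof (Cmod_ge_0 (1 + z * q ^ n)). nra.
  - pose proof (Cmod_ptheta_arg_le z q n Hq) as Hx.
    pose proof (Cmod_ptheta_le (z ^ 2 * q ^ (2 * n + 1)) _ _ ltac:(lra) HQ (HTh n)) as HT.
    eapply Rle_trans; [exact HT|].
    unfold Rdiv. rewrite !Rmult_1_l. apply Rinv_le_contravar; lra.
Qed.

Lemma is_series_rhs (q z F G : C) (Th : nat -> C) : (Cmod q < 1)%R -> (Cmod z < 1)%R ->
  (forall n, is_ptheta (z ^ 2 * q ^ (2 * n + 1)) (q ^ 2) (Th n)) ->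
  is_series (quot_term q z) F ->
  is_series (fun n => coef z q n * (- z) ^ n * q ^ (n * n + n)) G ->
  is_series (fun n => coef z q n * (1 + q ^ n + z * q ^ n - z * q ^ (2 * n))
                      * (- z) ^ n * q ^ (n * n) * Th n) (F + G).
Proof.
  intros Hq Hz HTh HF HG.
  set (W := fun n => defect (- z * (1 + z * q ^ n)) q z n * Th n).
  assert (Hsum : is_series (fun n => quot_term q z n + coef z q n * (- z) ^ n * q ^ (n * n + n)
                                     + (W n - W (S n))) (F + G + W O)).
  { apply (is_series_plus (K := C_AbsRing) (V := C_NormedModule));
      [apply (is_series_plus (K := C_AbsRing) (V := C_NormedModule)) |]; try assumption.
    apply is_series_telescope, rhs_defect_vanishes; assumption. }
  replace (W O) with (RtoC 0) in Hsum by (unfold W; rewrite defect_0; ring).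
  rewrite Cplus_0_r in Hsum.
  eapply is_series_ext; [| exact Hsum]. intros n. symmetry.
  apply rhs_term_telescope; [exact Hq | exact Hz |].
  apply (is_ptheta_rec _ (q ^ 2)); [apply HTh|].
  replace (z ^ 2 * q ^ (2 * n + 1) * q ^ 2) with (z ^ 2 * q ^ (2 * S n + 1))
    by (replace (2 * S n + 1)%nat with (2 * n + 1 + 2)%nat by lia; rewrite Cpow_add_r; ring).
  apply HTh.
Qed.

Theorem corollary3p3 (q z : C) :
  (Cmod q < 1)%R -> (Cmod z < 1)%R ->
  (forall j : nat, (1 <= j)%nat -> - z * q ^ j <> 1) ->
  exists (Pp Pm S : C) (Th : nat -> C),
    is_qpoch_inf (z * q) q Pp /\
    is_qpoch_inf (- z * q) q Pm /\
    (forall n : nat, is_ptheta (z ^ 2 * q ^ (2 * n + 1)) (q ^ 2) (Th n)) /\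
    is_series (fun n : nat => coef z q n * (- z) ^ n * q ^ (n * n + n)) S /\
    is_series
      (fun n : nat => coef z q n * (1 + q ^ n + z * q ^ n - z * q ^ (2 * n))
                      * (- z) ^ n * q ^ (n * n) * Th n)
      (Pp / Pm + S).
Proof.
  (* The third hypothesis is implied by |z| < 1 and |q| < 1. *)
  intros Hq Hz _.
  pose proof (Cmod_neg_mul_le z q ltac:(lra)) as Hmzq.
  destruct (ex_qpoch_inf (z * q) q Hq ltac:(apply Rlt_le, Cmod_mul_lt_1; lra)) as [Pp HPp].
  destruct (ex_qpoch_inf (- z * q) q Hq ltac:(lra)) as [Pm HPm].
  destruct (ex_series_quot_term q z Hq Hz) as [F HF].
  destruct (ex_series_coef_term_qpow q z Hq Hz) as [G HG].
  destruct (choice (fun n T => is_ptheta (z ^ 2 * q ^ (2 * n + 1)) (q ^ 2) T)) as [Th HTh].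
  { intros n. apply ex_ptheta; [| apply Cmod_pow_le_1; lra].
    pose proof (Cmod_ptheta_arg_le z q n Hq). pose proof (Cmod_ge_0 z). nra. }
  exists Pp, Pm, G, Th. split; [exact HPp|]. split; [exact HPm|]. split; [exact HTh|].
  split; [exact HG|].
  assert (EF : Pp / Pm = F).
  { rewrite <- (quot_mul_qpoch_inf q z F Pp Pm Hq Hz HF HPp HPm).
    field. apply (is_qpoch_inf_neq0 (- z * q) q); assumption. }
  rewrite EF. apply is_series_rhs; assumption.
Qed.
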